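(* In the sleeping multi-armed bandit setting, let $(\ell_t)_{t\ge1}$ be i.i.d. random loss vectors in $[0,1]^K$ with mean vector $\mu$, where for each $t$, $\ell_t$ is independent of everything determined before the learner observes $\ell_t(k_t)$ at round $t$ (including $S_1,\dots,S_t$ and $k_1,\dots,k_t$), and let $(S_t)_{t\ge1}$ be any sequence of availability sets such that $S_t$ may depend only on $(\ell_s)_{s\le t-1}$ (and past play). Then for any algorithm, $$\max_{1\le i,j\le K}\mathbb E\big[R_T^{\mathrm{int}}(i\to j)\big]\le\max_{\sigma}\mathbb E\big[R_T^{\mathrm{ordering}}(\sigma)\big],$$ the maximum on the right being over all orderings $\sigma$ of $[K]$.
   Context: Sleeping multi-armed bandit setting: $K$ arms $[K]$. At each round $t$ a nonempty availability set $S_t\subseteq[K]$ is revealed, the learner (possibly randomized, using only $S_1,\dots,S_t$, previously observed losses and internal randomness) selects $k_t\in S_t$ and observes $\ell_t(k_t)$. Internal sleeping regret: $R_T^{\mathrm{int}}(i\to j)=\sum_{t=1}^T\big(\ell_t(k_t)-\ell_t(j)\big)\mathbf 1\{k_t=i,\ j\in S_t\}$. An ordering is a permutation $\sigma=(\sigma_1,\dots,\sigma_K)$ of $[K]$; for nonempty $S\subseteq[K]$, $\sigma(S)=\sigma_m$ with $m=\min\{i:\sigma_i\in S\}$. Ordering regret: $R_T^{\mathrm{ordering}}(\sigma)=\sum_{t=1}^T\big(\ell_t(k_t)-\ell_t(\sigma(S_t))\big)$. *)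

From HB Require Import structures.
From mathcomp Require Import all_boot all_order all_algebra.
From mathcomp Require Import all_classical all_reals all_analysis.
From mathcomp Require Import perm.
Set Implicit Arguments. Unset Strict Implicit. Unset Printing Implicit Defensive.
Import Order.TTheory GRing.Theory Num.Theory.
Local Open Scope classical_set_scope.
Local Open Scope ring_scope.

(* An ordering is a permutation sigma of 'I_K, read as the
   list (sigma 0, ..., sigma (K-1)).  [ordering_sel sigma S] is sigma_m for the
   least position m with sigma_m \in S (None iff S is empty). *)
Definition ordering_sel (K : nat) (sigma : {perm 'I_K}) (S : {set 'I_K})
  : option 'I_K :=
  omap sigma [pick m : 'I_K | (sigma m \in S) &&
                 [forall m' : 'I_K, (sigma m' \in S) ==> (m <= m')%N]].

(* Rounds are indexed t = 0, ..., T-1 (the paper's rounds 1..T).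
   l t a x : loss of arm a at round t, k t x : chosen arm, S t x : available set,
   on sample point x. *)
Definition int_regret {R : realType} {Om : Type} (K : nat)
  (l : nat -> 'I_K -> Om -> R) (k : nat -> Om -> 'I_K)
  (S : nat -> Om -> {set 'I_K}) (T : nat) (i j : 'I_K) (x : Om) : R :=
  \sum_(t < T) (l t (k t x) x - l t j x) *
               ((k t x == i) && (j \in S t x))%:R.

Definition ordering_regret {R : realType} {Om : Type} (K : nat)
  (l : nat -> 'I_K -> Om -> R) (k : nat -> Om -> 'I_K)
  (S : nat -> Om -> {set 'I_K}) (T : nat) (sigma : {perm 'I_K}) (x : Om) : R :=
  \sum_(t < T) (l t (k t x) x -
     match ordering_sel sigma (S t x) with Some a => l t a x | None => 0 end).

(* the event {forall a, l t a \in B a} : a generic "rectangle" event of the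
   random vector l t; such events form a pi-system generating sigma(l t). *)
Definition rect_event {R : realType} {Om : Type} (K : nat)
  (l : nat -> 'I_K -> Om -> R) (t : nat) (B : 'I_K -> set R) : set Om :=
  [set x | forall a, B a (l t a x)].

(* Fix arms i, j and let sigma list the arms by increasing mean, so that
   sigma(S) is an available arm of least mean.  At round t the events
   {k_t = a}, {j \in S_t} and {sigma(S_t) = a} are determined before l_t is
   drawn, hence independent of it; integrating against them replaces every
   loss l_t(a) by its mean mu(a) in both expected regrets.  The comparison is
   then pointwise: on {k_t = i, j \in S_t}, mu(k_t) - mu(j) <= mu(k_t) -
   mu(sigma(S_t)) because j is available, and elsewhere 0 <= mu(k_t) -
   mu(sigma(S_t)) because k_t is available. *)

From HB Require Import structures.
From mathcomp Require Import all_boot all_order all_algebra.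
From mathcomp Require Import all_classical all_reals all_analysis.
From mathcomp Require Import perm measurable_realfun.
Set Implicit Arguments. Unset Strict Implicit. Unset Printing Implicit Defensive.
Import Order.TTheory GRing.Theory Num.Theory.
Local Open Scope classical_set_scope.
Local Open Scope ring_scope.
Import HBNNSimple.

Section integral_law.
Local Open Scope ereal_scope.
Context d (R : realType) (Om : measurableType d).
Implicit Types (m : {measure set Om -> \bar R}) (f : Om -> R).

Lemma integral_nnsfun_comp m D (g : {nnsfun R >-> R}) f :
  measurable D -> measurable_fun setT f ->
  \int[m]_(x in D) (g (f x))%:E =
  \sum_(r \in range g) r%:E * m (f @^-1` (g @^-1` [set r]) `&` D).
Proof.
move=> mD mf.
have mfg r : measurable (f @^-1` (g @^-1` [set r])).
  by rewrite -(setTI (f @^-1` _)); apply: mf => //; exact: measurable_funPTI.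
under eq_integral do rewrite fimfunE -fsumEFin//.
rewrite ge0_integral_fsum//; last 2 first.
- move=> r; apply/measurable_EFinP; apply: measurable_funM => //.
  by apply: measurableT_comp => //; exact: measurable_funTS.
- by move=> r x _; rewrite nnfun_muleindic_ge0.
apply: eq_fsbigr => r _.
under eq_integral do rewrite -[\1__ _]/(\1_(f @^-1` (g @^-1` [set r])) _).
rewrite (integralZl_indic mD (fun r => f @^-1` (g @^-1` [set r])))//.
- by rewrite integral_indic.
- by move=> r0; rewrite preimage_nnfun0// preimage_set0.
Qed.

(* The integral of a nonnegative [f] only depends on the law of [f]: approximate
   [f] by [g_n \o f] with [g_n] simple functions on [R] increasing to [id]. *)
Lemma ge0_integral_eq_law m1 m2 D1 D2 f :
  measurable D1 -> measurable D2 -> measurable_fun setT f ->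
  (forall x, (0 <= f x)%R) ->
  (forall B, measurable B -> m1 (f @^-1` B `&` D1) = m2 (f @^-1` B `&` D2)) ->
  \int[m1]_(x in D1) (f x)%:E = \int[m2]_(x in D2) (f x)%:E.
Proof.
move=> mD1 mD2 mf f0 hlaw.
have mabs :=
  measurableT_comp (@EFin_measurable R setT) (@normr_measurable R setT).
pose g := nnsfun_approx measurableT mabs.
have approx m D : measurable D ->
    \int[m]_(x in D) (f x)%:E = limn (fun n => \int[m]_(x in D) (g n (f x))%:E).
  move=> mD; rewrite -monotone_convergence//.
  - apply: eq_integral => x _; apply/esym/cvg_lim => //.
    have := @cvg_nnsfun_approx _ _ _ setT measurableT _ mabs _ (f x) I.
    by rewrite /= ger0_norm//; apply => y _; rewrite lee_fin.
  - move=> n; apply/measurable_EFinP; apply: measurableT_comp => //.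
    exact: measurable_funTS.
  - by move=> n x _; rewrite lee_fin.
  - by move=> x _ a b ab; rewrite lee_fin; exact/lefP/nd_nnsfun_approx.
rewrite (approx _ _ mD1) (approx _ _ mD2); congr (limn _); apply/funext => n.
by rewrite !integral_nnsfun_comp//; apply: eq_fsbigr => r _; rewrite hlaw.
Qed.

End integral_law.

Lemma ge0_integral_indep d (R : realType) (Om : measurableType d)
    (P : probability Om R) (A : set Om) (f : Om -> R) :
  measurable A -> measurable_fun setT f -> (forall x, 0 <= f x) ->
  (forall B, measurable B -> P (A `&` f @^-1` B) = (P A * P (f @^-1` B))%E) ->
  (\int[P]_(x in A) (f x)%:E = P A * \int[P]_x (f x)%:E)%E.
Proof.
move=> mA mf f0 hind.
pose c : {nonneg R} := NngNum (fine_ge0 (measure_ge0 P A)).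
have PAc : P A = c%:num%:E by rewrite /= fineK// fin_num_measure.
rewrite PAc -ge0_integral_mscale//; last 2 first.
- exact/measurable_EFinP.
- by move=> x _; rewrite lee_fin.
apply: ge0_integral_eq_law => // B mB.
by rewrite /mscale /= setIT setIC hind// PAc.
Qed.

Lemma sigma_algebra_setI (T : pointedType) (G : set (set T)) :
  sigma_algebra setT G -> setI_closed G.
Proof.
move=> sG; rewrite -(measurable_g_measurableTypeE sG).
exact: (@measurableI _ (g_sigma_algebraType G)).
Qed.

Lemma sigma_algebra_preimage_fin (T : pointedType) (G : set (set T))
    (I : finType) (f : T -> I) :
  sigma_algebra setT G -> (forall i, G (f @^-1` [set i])) ->
  forall B : set I, G (f @^-1` B).
Proof.
move=> sG; rewrite -(measurable_g_measurableTypeE sG) => hf B.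
have -> : f @^-1` B = \bigcup_(i in B) f @^-1` [set i].
  apply/seteqP; split => [x Bfx|x [i Bi fxi]]; first by exists (f x).
  by rewrite /preimage/= fxi.
exact: fin_bigcup_measurable finite_finset _.
Qed.

Section bounded_measurable.
Context d (R : realType) (Om : measurableType d).
Implicit Types f g : Om -> R.

Definition bounded_measurable f :=
  measurable_fun setT f /\ exists M : R, forall x, `|f x| <= M.

Lemma bounded_measurable_integrable (P : probability Om R) f :
  bounded_measurable f -> P.-integrable setT (EFin \o f).
Proof.
case=> mf [M hM].
apply: (@le_integrable _ _ _ P setT measurableT _ (EFin \o cst `|M|)).
- exact/measurable_EFinP.
- by move=> x _ /=; rewrite !normr_id lee_fin (le_trans (hM x)) ?ler_norm.
- exact: finite_measure_integrable_cst.
Qed.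

Lemma bounded_measurable_cst (c : R) : bounded_measurable (fun=> c).
Proof. by split; [exact: measurable_cst|exists `|c|]. Qed.

Lemma bounded_measurable_indic (A : set Om) :
  measurable A -> bounded_measurable (\1_A).
Proof.
move=> mA; split; first exact: measurable_indic.
by exists 1 => x; rewrite indicE; case: (_ \in _); rewrite ?normr1 ?normr0.
Qed.

Lemma bounded_measurableD f g : bounded_measurable f -> bounded_measurable g ->
  bounded_measurable (f \+ g).
Proof.
case=> mf [M hM] [mg [N hN]]; split; first exact: measurable_funD.
by exists (M + N) => x; rewrite (le_trans (ler_normD _ _)) ?lerD.
Qed.

Lemma bounded_measurableB f g : bounded_measurable f -> bounded_measurable g ->
  bounded_measurable (f \- g).
Proof.
case=> mf [M hM] [mg [N hN]]; split; first exact: measurable_funB.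
by exists (M + N) => x; rewrite (le_trans (ler_normB _ _)) ?lerD.
Qed.

Lemma bounded_measurableM f g : bounded_measurable f -> bounded_measurable g ->
  bounded_measurable (f \* g).
Proof.
case=> mf [M hM] [mg [N hN]]; split; first exact: measurable_funM.
exists (`|M| * `|N|) => x; rewrite normrM.
by apply: ler_pM => //; apply: le_trans (ler_norm _); [exact: hM|exact: hN].
Qed.

Lemma bounded_measurable_sum (I : Type) (s : seq I) (F : I -> Om -> R) :
  (forall i, bounded_measurable (F i)) ->
  bounded_measurable (fun x => \sum_(i <- s) F i x).
Proof.
move=> hF; elim: s => [|i s IH].
  by under eq_fun do rewrite big_nil; exact: bounded_measurable_cst.
by under eq_fun do rewrite big_cons; exact: bounded_measurableD.
Qed.

Local Open Scope ereal_scope.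

Lemma integralB_bounded (P : probability Om R) f g :
  bounded_measurable f -> bounded_measurable g ->
  \int[P]_x (f x - g x)%:E = \int[P]_x (f x)%:E - \int[P]_x (g x)%:E.
Proof.
move=> bf bg; under eq_integral do rewrite EFinB.
by apply: integralB_EFin => //; exact: bounded_measurable_integrable.
Qed.

Lemma integral_sum_bounded (P : probability Om R) (I : Type) (s : seq I)
    (F : I -> Om -> R) :
  (forall i, bounded_measurable (F i)) ->
  \int[P]_x (\sum_(i <- s) F i x)%:E = \sum_(i <- s) \int[P]_x (F i x)%:E.
Proof.
move=> bF; under eq_integral do rewrite -sumEFin.
by apply: integral_sum => // i; exact: bounded_measurable_integrable.
Qed.

End bounded_measurable.

Lemma ordering_selP K (sg : {perm 'I_K}) (A : {set 'I_K}) b : b \in A ->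
  exists a, [/\ ordering_sel sg A = Some a, a \in A &
    forall c, c \in A -> ((sg^-1)%g a <= (sg^-1)%g c)%N].
Proof.
move=> bA; rewrite /ordering_sel.
case: pickP => [m /andP[Asgm /forallP min_m]|none].
  exists (sg m); split => // c cA; rewrite permK.
  by move: (min_m ((sg^-1)%g c)); rewrite permKV cA => /implyP; apply.
have Asgb : sg ((sg^-1)%g b) \in A by rewrite permKV.
have [m Asgm min_m] := @arg_minnP _ _ (fun m => sg m \in A) val Asgb.
exfalso; have := none m; rewrite Asgm /= => /negbT/negP; apply.
by apply/forallP => m'; apply/implyP; exact: min_m.
Qed.

Lemma exists_sorting_perm (R : realDomainType) K (mu : 'I_K -> R) :
  exists sg : {perm 'I_K},
    forall p q : 'I_K, (p <= q)%N -> mu (sg p) <= mu (sg q).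
Proof.
case: K mu => [|n] mu; first by exists 1%g => -[].
pose le := [rel a b : 'I_n.+1 | mu a <= mu b].
pose s := sort le (enum 'I_n.+1).
have size_s : size s = n.+1 by rewrite size_sort size_enum_ord.
have uniq_s : uniq s by rewrite sort_uniq enum_uniq.
have inj : injective (fun m : 'I_n.+1 => nth ord0 s m).
  by move=> p q /eqP; rewrite nth_uniq ?size_s// => /eqP/val_inj.
exists (perm inj) => p q pq; rewrite !permE.
apply: (sorted_leq_nth (leT := le)) => //; rewrite ?inE ?size_s//.
- by move=> b a c /= ab bc; exact: le_trans ab bc.
- by move=> a /=.
- by apply: sort_sorted => a b; exact: le_total.
Qed.

Definition selects_min_mean (R : realDomainType) K (mu : 'I_K -> R)
    (sg : {perm 'I_K}) :=
  forall (A : {set 'I_K}) b, b \in A ->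
    exists2 a, ordering_sel sg A = Some a & forall c, c \in A -> mu a <= mu c.

Lemma exists_ordering_min_mean (R : realDomainType) K (mu : 'I_K -> R) :
  exists sg : {perm 'I_K}, selects_min_mean mu sg.
Proof.
have [sg sorted_sg] := exists_sorting_perm mu.
exists sg => A b /(ordering_selP sg)[a [-> _ min_a]]; exists a => // c cA.
by have := sorted_sg _ _ (min_a c cA); rewrite !permKV.
Qed.

Lemma mul_indic_fibresE (T : Type) (R : pzRingType) (I : finType) (g : T -> I)
    (F : I -> T -> R) (A : set T) x :
  F (g x) x * \1_A x = \sum_i F i x * \1_(A `&` g @^-1` [set i]) x.
Proof.
rewrite (bigD1 (g x)) //= big1 ?addr0 => [|i gxi]; last first.
  by rewrite indicE memNset ?mulr0// => -[_ /= gxE]; rewrite gxE eqxx in gxi.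
rewrite !indicE; case: (boolP (x \in A)) => [/set_mem Ax|/negP Ax].
  by rewrite mem_set.
by rewrite memNset// => -[/mem_set].
Qed.

Section index_integrals.
Context d (R : realType) (Om : measurableType d) (P : probability Om R).
Context (I : finType) (g : Om -> I) (A : set Om).
Hypotheses (mg : forall i, measurable (g @^-1` [set i])) (mA : measurable A).

Lemma bounded_measurable_index (F : I -> Om -> R) :
  (forall i, bounded_measurable (F i)) ->
  bounded_measurable (fun x => F (g x) x * \1_A x).
Proof.
move=> bF; rewrite (funext (mul_indic_fibresE g F A)).
apply: bounded_measurable_sum => i; apply: bounded_measurableM => //.
exact/bounded_measurable_indic/measurableI.
Qed.

Lemma integral_index (F : I -> Om -> R) :
  (forall i, bounded_measurable (F i)) ->
  (\int[P]_x (F (g x) x * \1_A x)%:E =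
   \sum_i \int[P]_x (F i x * \1_(A `&` g @^-1` [set i]) x)%:E)%E.
Proof.
move=> bF; under eq_integral do rewrite (mul_indic_fibresE g F A).
apply: integral_sum_bounded => i; apply: bounded_measurableM => //.
exact/bounded_measurable_indic/measurableI.
Qed.

End index_integrals.

Lemma integral_cst_mul_indic d (R : realType) (Om : measurableType d)
    (P : probability Om R) (c : R) (A : set Om) :
  measurable A -> (\int[P]_x (c * \1_A x)%:E = c%:E * P A)%E.
Proof.
move=> mA; under eq_integral do rewrite EFinM.
by rewrite integralZl ?integral_indic ?setIT//; exact: integrable_indic.
Qed.

Definition gap_sum {R : realType} {Om : Type} {I : Type}
  (F : nat -> I -> Om -> R) (g1 g2 : nat -> Om -> I) (A : nat -> set Om)
  (T : nat) (x : Om) : R :=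
  \sum_(t < T) (F t (g1 t x) x - F t (g2 t x) x) * \1_(A t) x.

Section gap_sum.
Context d (R : realType) (Om : measurableType d) (I : finType).
Context (g1 g2 : nat -> Om -> I) (A : nat -> set Om).
Hypotheses (mg1 : forall t i, measurable (g1 t @^-1` [set i]))
  (mg2 : forall t i, measurable (g2 t @^-1` [set i]))
  (mA : forall t, measurable (A t)).

Lemma bounded_measurable_gap (F : nat -> I -> Om -> R) t :
  (forall i, bounded_measurable (F t i)) ->
  bounded_measurable (fun x => (F t (g1 t x) x - F t (g2 t x) x) * \1_(A t) x).
Proof.
move=> bF; rewrite (funext (fun x => mulrBl _ _ _)).
by apply: bounded_measurableB; exact: bounded_measurable_index.
Qed.

Lemma bounded_measurable_gap_sum (F : nat -> I -> Om -> R) T :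
  (forall t i, bounded_measurable (F t i)) ->
  bounded_measurable (gap_sum F g1 g2 A T).
Proof.
by move=> bF; apply: bounded_measurable_sum => t; exact: bounded_measurable_gap.
Qed.

End gap_sum.

Section expected_loss.
Context (R : realType) (d : measure_display) (Om : measurableType d)
  (P : probability Om R) (K : nat) (mu : 'I_K -> R)
  (l : nat -> 'I_K -> Om -> R) (G : nat -> set (set Om)).
Hypotheses
  (hl01 : forall t a x, 0 <= l t a x <= 1)
  (hlmeas : forall t a, measurable_fun setT (l t a))
  (hmean : forall t a, (\int[P]_x (l t a x)%:E = (mu a)%:E)%E)
  (hGsig : forall t, sigma_algebra setT (G t))
  (hGsub : forall t, G t `<=` measurable)
  (hind : forall t (A : set Om) (B : 'I_K -> set R), G t A ->
     (forall a, measurable (B a)) ->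
     P (A `&` rect_event l t B) = (P A * P (rect_event l t B))%E).

Lemma bounded_measurable_loss t a : bounded_measurable (l t a).
Proof.
split; first exact: hlmeas.
by exists 1 => x; have /andP[l_ge0 l_le1] := hl01 t a x; rewrite ger0_norm.
Qed.

Lemma integral_loss_indic t a A : G t A ->
  (\int[P]_x (l t a x * \1_A x)%:E = (mu a)%:E * P A)%E.
Proof.
move=> GA; have mA := hGsub GA.
transitivity (\int[P]_(x in A) (l t a x)%:E)%E.
  rewrite [RHS]integral_mkcond; apply: eq_integral => x _.
  by rewrite /patch indicE; case: ifP; rewrite ?mulr1 ?mulr0.
rewrite ge0_integral_indep//; first by rewrite hmean muleC.
  by move=> x; have /andP[] := hl01 t a x.
move=> B mB; suff -> : l t a @^-1` B =
    rect_event l t (fun b => if b == a then B else setT).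
  by apply: hind => // b; case: eqP.
apply/seteqP; split => x /= => [Bx b|/(_ a)]; last by rewrite eqxx.
by case: eqP => [->|].
Qed.

Lemma integral_loss_index t (g : Om -> 'I_K) A :
  (forall a, G t (g @^-1` [set a])) -> G t A ->
  (\int[P]_x (l t (g x) x * \1_A x)%:E = \int[P]_x (mu (g x) * \1_A x)%:E)%E.
Proof.
move=> Gg GA; have mg a := hGsub (Gg a); have mA := hGsub GA.
rewrite (integral_index P mg mA (F := l t)); last first.
  exact: bounded_measurable_loss.
rewrite (integral_index P mg mA (F := fun a _ => mu a)); last first.
  by move=> a; exact: bounded_measurable_cst.
apply: eq_bigr => a _; rewrite integral_cst_mul_indic ?integral_loss_indic//.
  exact: sigma_algebra_setI.
exact: measurableI.
Qed.

Lemma integral_gap_sum_loss g1 g2 A T :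
  (forall t a, G t (g1 t @^-1` [set a])) ->
  (forall t a, G t (g2 t @^-1` [set a])) -> (forall t, G t (A t)) ->
  (\int[P]_x (gap_sum l g1 g2 A T x)%:E =
   \int[P]_x (gap_sum (fun _ a _ => mu a) g1 g2 A T x)%:E)%E.
Proof.
move=> G1 G2 GA.
have mg1 t a := hGsub (G1 t a); have mg2 t a := hGsub (G2 t a).
have mA t := hGsub (GA t).
have bmu (a : 'I_K) : bounded_measurable (fun _ : Om => mu a).
  exact: bounded_measurable_cst.
rewrite !integral_sum_bounded => [|t|t]; last 2 first.
- exact: (bounded_measurable_gap mg1 mg2 mA (F := fun _ a _ => mu a)).
- apply: (bounded_measurable_gap mg1 mg2 mA (F := l)) => a.
  exact: bounded_measurable_loss.
apply: eq_bigr => t _.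
have bl g : (forall a, measurable (g @^-1` [set a])) ->
    bounded_measurable (fun x => l t (g x) x * \1_(A t) x).
  move=> mg; apply: (bounded_measurable_index mg (mA t) (F := l t)).
  exact: bounded_measurable_loss.
have bm g : (forall a, measurable (g @^-1` [set a])) ->
    bounded_measurable (fun x => mu (g x) * \1_(A t) x).
  move=> mg.
  exact: (bounded_measurable_index mg (mA t) (F := fun a _ => mu a)).
under eq_integral do rewrite mulrBl; under [RHS]eq_integral do rewrite mulrBl.
rewrite integralB_bounded; [|exact: bl (mg1 t)|exact: bl (mg2 t)].
rewrite integralB_bounded; [|exact: bm (mg1 t)|exact: bm (mg2 t)].
by rewrite !integral_loss_index.
Qed.

End expected_loss.

Section regret_decomposition.
Context (R : realType) (Om : Type) (K : nat).
Context (l : nat -> 'I_K -> Om -> R) (k : nat -> Om -> 'I_K)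
  (S : nat -> Om -> {set 'I_K}).

Definition play_avail (i j : 'I_K) (t : nat) : set Om :=
  [set x | (k t x == i) && (j \in S t x)].

(* The fallback [k t x] only matters when [S t x] is empty, which the
   constraint [k t x \in S t x] rules out. *)
Definition ordering_play (sg : {perm 'I_K}) (t : nat) (x : Om) : 'I_K :=
  odflt (k t x) (ordering_sel sg (S t x)).

Lemma int_regret_gap_sumE T i j x :
  int_regret l k S T i j x = gap_sum l k (fun _ _ => j) (play_avail i j) T x.
Proof. by apply: eq_bigr => t _; rewrite indicE /play_avail mem_setE. Qed.

Lemma ordering_regret_gap_sumE T sg x : (forall t, k t x \in S t x) ->
  ordering_regret l k S T sg x =
  gap_sum l k (ordering_play sg) (fun=> setT) T x.
Proof.
move=> kS; apply: eq_bigr => t _; rewrite indicT mulr1 /ordering_play.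
by have [a [-> _ _]] := ordering_selP sg (kS t).
Qed.

Lemma gap_sum_mean_le (mu : 'I_K -> R) (sg : {perm 'I_K}) T (i j : 'I_K) x :
  (forall t, k t x \in S t x) -> selects_min_mean mu sg ->
  gap_sum (fun _ a _ => mu a) k (fun _ _ => j) (play_avail i j) T x <=
  gap_sum (fun _ a _ => mu a) k (ordering_play sg) (fun=> setT) T x.
Proof.
move=> kS min_sel; apply: ler_sum => t _; rewrite indicT mulr1 indicE.
have [a sel_a min_a] := min_sel _ _ (kS t); rewrite /ordering_play sel_a /=.
case: (boolP (x \in _)) => [/set_mem/andP[_ jS]|_]; rewrite ?mulr1 ?mulr0.
  by rewrite lerD2l lerN2 min_a.
by rewrite subr_ge0 min_a.
Qed.

End regret_decomposition.

Section regret_comparison.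
Context (R : realType) (d : measure_display) (Om : measurableType d)
  (P : probability Om R) (K : nat) (mu : 'I_K -> R)
  (l : nat -> 'I_K -> Om -> R) (k : nat -> Om -> 'I_K)
  (S : nat -> Om -> {set 'I_K}) (G : nat -> set (set Om)).
Hypotheses
  (hl01 : forall t a x, 0 <= l t a x <= 1)
  (hlmeas : forall t a, measurable_fun setT (l t a))
  (hmean : forall t a, (\int[P]_x (l t a x)%:E = (mu a)%:E)%E)
  (hGsig : forall t, sigma_algebra setT (G t))
  (hGsub : forall t, G t `<=` measurable)
  (hGk : forall t s i, (s <= t)%N -> G t (k s @^-1` [set i]))
  (hGS : forall t s (A : {set 'I_K}), (s <= t)%N -> G t (S s @^-1` [set A]))
  (hind : forall t (A : set Om) (B : 'I_K -> set R), G t A ->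
     (forall a, measurable (B a)) ->
     P (A `&` rect_event l t B) = (P A * P (rect_event l t B))%E)
  (hkS : forall t x, k t x \in S t x).

Lemma G_preimage_play t (Q : set ('I_K * {set 'I_K})) :
  G t ((fun x => (k t x, S t x)) @^-1` Q).
Proof.
apply: sigma_algebra_preimage_fin => // -[a A].
have -> : (fun x => (k t x, S t x)) @^-1` [set (a, A)] =
    k t @^-1` [set a] `&` S t @^-1` [set A].
  by apply/seteqP; split => x /= => [[-> ->]|[-> ->]].
by apply: sigma_algebra_setI; [|exact: hGk|exact: hGS].
Qed.

Lemma int_regret_le_ordering_regret T (i j : 'I_K) (sg : {perm 'I_K}) :
  selects_min_mean mu sg ->
  (\int[P]_x (int_regret l k S T i j x)%:E <=
   \int[P]_x (ordering_regret l k S T sg x)%:E)%E.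
Proof.
move=> min_sel.
have Gplay t (h : 'I_K * {set 'I_K} -> 'I_K) a :
  G t ((fun x => h (k t x, S t x)) @^-1` [set a]) :=
  G_preimage_play t (h @^-1` [set a]).
have Gk t a : G t (k t @^-1` [set a]) := Gplay t fst a.
have Gj t a : G t ((fun=> j) @^-1` [set a]) := Gplay t (fun=> j) a.
have Gsel t a : G t (ordering_play k S sg t @^-1` [set a]).
  exact: (Gplay t (fun p => odflt p.1 (ordering_sel sg p.2))).
have Gavail t : G t (play_avail k S i j t) :=
  G_preimage_play t [set p : _ * {set _} | (p.1 == i) && (j \in p.2)].
have GT t : G t setT := G_preimage_play t setT.
under eq_integral do rewrite int_regret_gap_sumE.
under [X in (_ <= X)%E]eq_integral do rewrite ordering_regret_gap_sumE//.
rewrite !(integral_gap_sum_loss hl01 hlmeas hmean hGsig hGsub hind)//.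
apply: le_integral => //.
- apply/bounded_measurable_integrable.
  apply: bounded_measurable_gap_sum => [t a|t a|t|t a].
  + exact: hGsub (Gk t a).
  + exact: hGsub (Gj t a).
  + exact: hGsub (Gavail t).
  + exact: bounded_measurable_cst.
- apply/bounded_measurable_integrable.
  apply: bounded_measurable_gap_sum => [t a|t a|t|t a].
  + exact: hGsub (Gk t a).
  + exact: hGsub (Gsel t a).
  + exact: hGsub (GT t).
  + exact: bounded_measurable_cst.
- by move=> x _; rewrite lee_fin; exact: gap_sum_mean_le.
Qed.

End regret_comparison.

Theorem mainTheorem4 (R : realType) (d : measure_display) (Om : measurableType d)
  (P : probability Om R) (K : nat) (T : nat) (mu : 'I_K -> R)
  (l : nat -> 'I_K -> Om -> R) (k : nat -> Om -> 'I_K)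
  (S : nat -> Om -> {set 'I_K}) (G : nat -> set (set Om))
  (hl01 : forall t a x, 0 <= l t a x <= 1)
  (hlmeas : forall t a, measurable_fun setT (l t a))
  (hmean : forall t a, (\int[P]_x (l t a x)%:E = (mu a)%:E)%E)
  (hident : forall t (B : 'I_K -> set R), (forall a, measurable (B a)) ->
     P (rect_event l t B) = P (rect_event l 0 B))
  (hGsig : forall t, sigma_algebra setT (G t))
  (hGsub : forall t, G t `<=` measurable)
  (hGk : forall t s i, (s <= t)%N -> G t (k s @^-1` [set i]))
  (hGS : forall t s (A : {set 'I_K}), (s <= t)%N -> G t (S s @^-1` [set A]))
  (hGl : forall t s a (B : set R), (s < t)%N -> measurable B ->
     G t (l s a @^-1` B))
  (hind : forall t (A : set Om) (B : 'I_K -> set R), G t A ->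
     (forall a, measurable (B a)) ->
     P (A `&` rect_event l t B) = (P A * P (rect_event l t B))%E)
  (hkS : forall t x, k t x \in S t x) :
  (\big[maxe/-oo]_(ij : 'I_K * 'I_K)
      \int[P]_x (int_regret l k S T ij.1 ij.2 x)%:E
   <= \big[maxe/-oo]_(sigma : {perm 'I_K})
      \int[P]_x (ordering_regret l k S T sigma x)%:E)%E.
Proof.
have [sg min_sel] := exists_ordering_min_mean mu.
elim/big_ind: _ => [|x y|[i j] _]; first exact: leNye.
  by rewrite ge_max => -> ->.
apply: le_trans (int_regret_le_ordering_regret hl01 hlmeas hmean hGsig hGsub
  hGk hGS hind hkS T i j min_sel) _.
by rewrite (bigD1 sg) //= le_max lexx.
Qed.
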